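(* Let $(T,f)$ be a merge tree and $\sigma\colon[0,1]\to T$ a curve. Any two distinct maximal violating subcurves of $\sigma$ are interior-disjoint.
   Context: A merge tree $(T,f)$: a finite rooted tree $T$ identified with its topological realisation, with a continuous $f\colon T\to\mathbb{R}\cup\{\infty\}$ strictly increasing towards the root, $f(v)=\infty$ iff $v$ is the root. A curve on $T$ is a continuous map $\sigma\colon[0,1]\to T$. A subcurve $[\ell,r]$ ($\ell,r\in[0,1]$) of $\sigma$ is violating if $\ell<r$, $\sigma(\ell)=\sigma(r)$, and $f(\sigma(t))>f(\sigma(\ell))$ for all $t\in(\ell,r)$. A violating subcurve is maximal if the interval is not contained in (the interval of) any other violating subcurve of $\sigma$. Two subcurves $[\ell_1,r_1],[\ell_2,r_2]$ are interior-disjoint if $(\ell_1,r_1)\cap(\ell_2,r_2)=\emptyset$. *)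

From HB Require Import structures.
From mathcomp Require Import all_boot all_order all_algebra.
From mathcomp Require Import all_classical all_reals all_analysis.
Set Implicit Arguments. Unset Strict Implicit. Unset Printing Implicit Defensive.
Import Order.TTheory GRing.Theory Num.Theory.
Import numFieldNormedType.Exports.
Local Open Scope classical_set_scope.
Local Open Scope ring_scope.

Section MergeTree.
Variables (R : realType) (n : nat).

Definition rooted_tree (root : 'I_n) (par : 'I_n -> 'I_n) : Prop :=
  par root = root /\ forall v, exists k, iter k par v = root.

(* Standard geometric realisation: vertex v is the standard basis vector
   e_v of R^n; the edge {v, par v} (v <> root) is the straight segment. *)
Definition vtx (v : 'I_n) : 'rV[R]_n := delta_mx 0 v.

Definition edge_pt (par : 'I_n -> 'I_n) (v : 'I_n) (t : R) : 'rV[R]_n :=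
  (1 - t) *: vtx v + t *: vtx (par v).

Definition realisation (root : 'I_n) (par : 'I_n -> 'I_n) : set 'rV[R]_n :=
  [set vtx root] `|`
  [set x | exists v, v != root /\ exists2 t, 0 <= t <= 1 & x = edge_pt par v t].

Definition merge_tree (root : 'I_n) (par : 'I_n -> 'I_n)
    (f : 'rV[R]_n -> \bar R) : Prop :=
  [/\ rooted_tree root par,
      {within realisation root par, continuous f},
      (forall v, v != root -> forall s t, 0 <= s -> s < t -> t <= 1 ->
          (f (edge_pt par v s) < f (edge_pt par v t))%E) &
      (forall x, realisation root par x -> (f x = +oo)%E <-> x = vtx root)].

Definition curve (root : 'I_n) (par : 'I_n -> 'I_n) (sigma : R -> 'rV[R]_n)
  : Prop :=
  {within `[0, 1], continuous sigma} /\
  (forall t, 0 <= t <= 1 -> realisation root par (sigma t)).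

Definition violating (f : 'rV[R]_n -> \bar R) (sigma : R -> 'rV[R]_n)
  (l r : R) : Prop :=
  [/\ 0 <= l, r <= 1, l < r, sigma l = sigma r &
      forall t, l < t -> t < r -> (f (sigma l) < f (sigma t))%E].

Definition maximal_violating (f : 'rV[R]_n -> \bar R)
  (sigma : R -> 'rV[R]_n) (l r : R) : Prop :=
  violating f sigma l r /\
  forall l' r', violating f sigma l' r' -> l' <= l -> r <= r' ->
    l' = l /\ r' = r.

Definition interior_disjoint (l1 r1 l2 r2 : R) : Prop :=
  forall t, ~ ((l1 < t < r1) /\ (l2 < t < r2)).

End MergeTree.

From mathcomp Require Import all_boot all_order all_algebra.
From mathcomp Require Import all_classical all_reals all_analysis.
Import Order.TTheory GRing.Theory Num.Theory.

Set Implicit Arguments.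
Unset Strict Implicit.
Unset Printing Implicit Defensive.

Local Open Scope ring_scope.

(* Violating subcurves cannot cross: if l1 < l2 < r1 < r2 then
   f(sigma l1) < f(sigma l2) < f(sigma r1) = f(sigma l1).  Hence overlapping
   violating subcurves are nested, and two overlapping maximal ones coincide. *)

Section MaximalViolating.
Variables (R : realType) (n : nat).
Variables (f : 'rV[R]_n -> \bar R) (sigma : R -> 'rV[R]_n).

Lemma violating_nocross (l1 r1 l2 r2 : R) :
  violating f sigma l1 r1 -> violating f sigma l2 r2 ->
  l1 < l2 -> l2 < r1 -> r2 <= r1.
Proof.
case=> _ _ _ sigma_l1r1 above1 [_ _ _ _ above2] lt_l1l2 lt_l2r1.
rewrite leNgt; apply/negP => lt_r1r2.
have lt_l1_l2 := above1 l2 lt_l1l2 lt_l2r1.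
have lt_l2_r1 := above2 r1 lt_l2r1 lt_r1r2.
by have := lt_trans lt_l1_l2 lt_l2_r1; rewrite -sigma_l1r1 ltxx.
Qed.

Lemma maximal_violating_overlap (l1 r1 l2 r2 : R) :
  maximal_violating f sigma l1 r1 -> maximal_violating f sigma l2 r2 ->
  l1 <= l2 -> l2 < r1 -> (l1, r1) = (l2, r2).
Proof.
move=> [V1 max1] [V2 max2] le_l1l2 lt_l2r1.
have [le_r2r1|lt_r1r2] := leP r2 r1.
  by have [-> ->] := max2 _ _ V1 le_l1l2 le_r2r1.
have [eq_l|ne_l] := eqVneq l1 l2.
  by subst l2; have [_ ->] := max1 _ _ V2 (lexx _) (ltW lt_r1r2).
have lt_l1l2 : l1 < l2 by rewrite lt_neqAle ne_l le_l1l2.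
by have := violating_nocross V1 V2 lt_l1l2 lt_l2r1; rewrite leNgt lt_r1r2.
Qed.

End MaximalViolating.

Theorem lemma18 (R : realType) (n : nat) (root : 'I_n) (par : 'I_n -> 'I_n)
  (f : 'rV[R]_n -> \bar R) (sigma : R -> 'rV[R]_n) :
  merge_tree root par f -> curve root par sigma ->
  forall l1 r1 l2 r2 : R,
    maximal_violating f sigma l1 r1 -> maximal_violating f sigma l2 r2 ->
    (l1, r1) <> (l2, r2) ->
    interior_disjoint l1 r1 l2 r2.
Proof.
move=> _ _ l1 r1 l2 r2 M1 M2 ne t [/andP[lt_l1t lt_tr1] /andP[lt_l2t lt_tr2]].
have [le_l1l2|lt_l2l1] := leP l1 l2.
  exact/ne/(maximal_violating_overlap M1 M2 le_l1l2)/(lt_trans lt_l2t).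
apply/ne/esym/(maximal_violating_overlap M2 M1 (ltW lt_l2l1)).
exact: lt_trans lt_l1t lt_tr2.
Qed.
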